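(* Let $(X,p)$ be a complete partial metric space and $(Y,s)$ a strong partial metric space, and let $f,g:X\to Y$ be sequentially continuous. Suppose $g$ is consistent and there are real numbers $r$, $A\ge0$ and $0<c<1$ such that for every $x\in X$ there exists $z\in X$ with $$s(f(z),g(z))-s(f(z),f(z))\le c[s(f(x),g(x))-s(f(x),f(x))]$$ and $$r\le p(z,z)\le p(x,z)\le r+A[s(f(x),g(x))-s(f(x),f(x))]$$ (i.e. $f$ and $g$ are $f$-mutually $c_r$-contractive). Then $f$ and $g$ have a coincidence point, i.e. there is $a\in X$ with $f(a)=g(a)$.
   Context: A partial metric on $X$ is $p:X\times X\to\mathbb{R}$ with, for all $x,y,z$: $p(x,x)\le p(x,y)$; $p(x,y)=p(y,x)$; $p(x,x)=p(x,y)=p(y,y)$ iff $x=y$; $p(x,y)\le p(x,z)+p(z,y)-p(z,z)$. A strong partial metric on $Y$ is $s:Y\times Y\to\mathbb{R}$ with $s(u,u)<s(u,v)$ for $u\neq v$, $s(u,v)=s(v,u)$, and $s(u,v)\le s(u,w)+s(w,v)-s(w,w)$. For such $q\in\{p,s\}$ the topology is generated by the balls $\{y\mid q(x,y)-q(x,x)<\epsilon\}$, so $a$ is a limit of $\{x_i\}$ iff for every $\epsilon>0$ there is $N$ with $q(a,x_i)-q(a,a)<\epsilon$ for all $i>N$. $\{x_i\}$ is Cauchy with central distance $r$ if for every $\epsilon>0$ there is $N$ with $|p(x_i,x_j)-r|<\epsilon$ for $i\ge j>N$; a special limit is a limit $a$ with $p(a,a)=r$; $(X,p)$ is complete if every Cauchy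 sequence has a special limit. A map $f:X\to Y$ is sequentially continuous if whenever $a$ is a limit of $\{x_i\}$, $f(a)$ is a limit of $\{f(x_i)\}$. $g$ is consistent if for all $x,z\in X$, $p(x,x)\le p(z,z)$ implies $s(g(x),g(x))\le s(g(z),g(z))$. *)

From Stdlib Require Import Reals.
Open Scope R_scope.

Definition is_partial_metric {X : Type} (p : X -> X -> R) : Prop :=
  (forall x y, p x x <= p x y) /\
  (forall x y, p x y = p y x) /\
  (forall x y, (p x x = p x y /\ p x y = p y y) <-> x = y) /\
  (forall x y z, p x y <= p x z + p z y - p z z).

Definition is_strong_partial_metric {Y : Type} (s : Y -> Y -> R) : Prop :=
  (forall u v, u <> v -> s u u < s u v) /\
  (forall u v, s u v = s v u) /\
  (forall u v w, s u v <= s u w + s w v - s w w).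

Definition is_limit {X : Type} (q : X -> X -> R) (x : nat -> X) (a : X) : Prop :=
  forall eps, eps > 0 -> exists N : nat, forall i, (i > N)%nat ->
    q a (x i) - q a a < eps.

Definition cauchy_central {X : Type} (p : X -> X -> R) (x : nat -> X) (r : R) : Prop :=
  forall eps, eps > 0 -> exists N : nat, forall i j, (i >= j)%nat -> (j > N)%nat ->
    Rabs (p (x i) (x j) - r) < eps.

Definition is_cauchy {X : Type} (p : X -> X -> R) (x : nat -> X) : Prop :=
  exists r, cauchy_central p x r.

Definition pm_complete {X : Type} (p : X -> X -> R) : Prop :=
  forall (x : nat -> X) (r : R), cauchy_central p x r ->
    exists a, is_limit p x a /\ p a a = r.

Definition seq_continuous {X Y : Type} (p : X -> X -> R) (s : Y -> Y -> R)
  (f : X -> Y) : Prop :=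
  forall (x : nat -> X) (a : X), is_limit p x a -> is_limit s (fun i => f (x i)) (f a).

Definition consistent {X Y : Type} (p : X -> X -> R) (s : Y -> Y -> R)
  (g : X -> Y) : Prop :=
  forall x z, p x x <= p z z -> s (g x) (g x) <= s (g z) (g z).

(* Pick, via choice, a step map F realising the contraction hypothesis and follow its orbit
   x_n from any point. The gaps d(x) = s(f x, g x) - s(f x, f x) decay like c^n, so the
   steps p(x_n, x_(n+1)) exceed r by at most A d(x_0) c^n; telescoping with the partial
   metric triangle inequality makes (x_n) Cauchy with central distance r. Its special
   limit a has p(a, a) = r <= p(x_n, x_n), so consistency gives s(g a, g a) <= s(g x_n, g x_n),
   and two triangle inequalities bound the gap s(f a, g a) - s(f a, f a) by quantities
   that vanish along the orbit by sequential continuity. A positive gap is impossible, and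
   in a strong partial metric a zero gap forces f a = g a. *)

From Stdlib Require Import Reals Lra Lia Classical ClassicalEpsilon.
Open Scope R_scope.

Lemma geometric_eventually_lt (c M eps : R) :
  0 <= c < 1 -> eps > 0 ->
  exists N : nat, forall n, (n > N)%nat -> M * c ^ n < eps.
Proof.
  intros Hc Heps.
  destruct (Rle_lt_dec M 0) as [HM | HM].
  - exists 0%nat. intros n _.
    pose proof (pow_le c n (proj1 Hc)). nra.
  - assert (Hy : 0 < eps / M) by (apply Rdiv_lt_0_compat; lra).
    destruct (pow_lt_1_zero c ltac:(rewrite Rabs_right; lra) _ Hy) as [N HN].
    exists N. intros n Hn.
    specialize (HN n ltac:(lia)).
    rewrite Rabs_right in HN by (apply Rle_ge, pow_le; lra).
    apply (Rmult_lt_compat_l M) in HN; [|lra].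
    replace (M * (eps / M)) with eps in HN by (field; lra).
    lra.
Qed.

Section PartialMetric.

Variables (X : Type) (p : X -> X -> R).
Hypothesis Hp : is_partial_metric p.

Lemma pm_self_le_r (x y : X) : p y y <= p x y.
Proof.
  destruct Hp as [Hself [Hsym _]].
  rewrite (Hsym x y). apply Hself.
Qed.

Variables (x : nat -> X) (r K c : R).
Hypotheses (HK : 0 <= K) (Hc : 0 <= c < 1).
Hypothesis Hdiag : forall n, r <= p (x (S n)) (x (S n)).
Hypothesis Hstep : forall n, p (x n) (x (S n)) <= r + K * c ^ n.

Lemma geometric_le_tail (n : nat) : K * c ^ n <= K / (1 - c) * c ^ n.
Proof.
  assert (Hinv : 1 <= / (1 - c)).
  { rewrite <- Rinv_1. apply Rinv_le_contravar; lra. }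
  pose proof (pow_le c n (proj1 Hc)).
  unfold Rdiv. assert (0 <= K * c ^ n) by nra. nra.
Qed.

Lemma pm_geometric_tail_le (m j : nat) :
  p (x j) (x (j + S m)%nat) <= r + K / (1 - c) * c ^ j.
Proof.
  revert j; induction m as [|m IHm]; intro j.
  - replace (j + 1)%nat with (S j) by lia.
    pose proof (Hstep j). pose proof (geometric_le_tail j). lra.
  - destruct Hp as [_ [_ [_ Htri]]].
    pose proof (Htri (x j) (x (j + S (S m))%nat) (x (S j))) as Hjk.
    replace (j + S (S m))%nat with (S j + S m)%nat in * by lia.
    pose proof (IHm (S j)). pose proof (Hstep j). pose proof (Hdiag j).
    assert (K / (1 - c) * c ^ j = K * c ^ j + K / (1 - c) * c ^ S j)
      by (simpl; field; lra).
    lra.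
Qed.

Lemma pm_geometric_cauchy : cauchy_central p x r.
Proof.
  intros eps Heps.
  destruct (geometric_eventually_lt c (K / (1 - c)) eps Hc Heps) as [N HN].
  exists (S N). intros i j Hij Hj.
  destruct j as [|j]; [lia|].
  assert (Hlow : r <= p (x i) (x (S j))).
  { pose proof (pm_self_le_r (x i) (x (S j))). pose proof (Hdiag j). lra. }
  assert (Hup : p (x i) (x (S j)) < r + eps).
  { destruct (Nat.eq_dec i (S j)) as [-> | Hne].
    - pose proof (pm_self_le_r (x j) (x (S j))). pose proof (Hstep j).
      pose proof (geometric_le_tail j). pose proof (HN j ltac:(lia)). lra.
    - replace i with (S j + S (i - S j - 1))%nat by lia.
      destruct Hp as [_ [Hsym _]]. rewrite Hsym.
      pose proof (pm_geometric_tail_le (i - S j - 1) (S j)).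
      pose proof (HN (S j) ltac:(lia)). lra. }
  rewrite Rabs_right; lra.
Qed.

End PartialMetric.

Definition sgap {Y : Type} (s : Y -> Y -> R) (u v : Y) : R := s u v - s u u.

Section StrongPartialMetric.

Variables (Y : Type) (s : Y -> Y -> R).
Hypothesis Hs : is_strong_partial_metric s.

Lemma sgap_pos (u v : Y) : u <> v -> 0 < sgap s u v.
Proof. intro Huv. destruct Hs as [Hlt _]. pose proof (Hlt u v Huv). unfold sgap. lra. Qed.

Lemma sgap_ge0 (u v : Y) : 0 <= sgap s u v.
Proof.
  destruct (classic (u = v)) as [-> | Huv].
  - unfold sgap. lra.
  - pose proof (sgap_pos u v Huv). lra.
Qed.

Lemma sgap_le_via (u v u' v' : Y) :
  s v v <= s v' v' ->
  sgap s u v <= sgap s u u' + sgap s u' v' + sgap s v v'.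
Proof.
  intro Hvv. destruct Hs as [_ [Hsym Htri]].
  pose proof (Htri u v u'). pose proof (Htri u' v v').
  rewrite (Hsym v' v) in *. unfold sgap. lra.
Qed.

Lemma coincidence_at_limit (X : Type) (p : X -> X -> R) (f g : X -> Y)
  (x : nat -> X) (a : X) :
  seq_continuous p s f -> seq_continuous p s g -> consistent p s g ->
  is_limit p x a ->
  (forall n, p a a <= p (x (S n)) (x (S n))) ->
  (forall eps, eps > 0 -> exists N : nat, forall n, (n > N)%nat ->
     sgap s (f (x n)) (g (x n)) < eps) ->
  f a = g a.
Proof.
  intros Hf Hg Hcons Hlim Hdiag Hgap.
  apply NNPP. intro Hne.
  set (e := sgap s (f a) (g a) / 3).
  assert (He : e > 0) by (pose proof (sgap_pos _ _ Hne); unfold e; lra).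
  destruct (Hf x a Hlim e He) as [N1 HN1].
  destruct (Hg x a Hlim e He) as [N2 HN2].
  destruct (Hgap e He) as [N3 HN3].
  set (m := (N1 + N2 + N3)%nat).
  pose proof (HN1 (S m) ltac:(unfold m; lia)).
  pose proof (HN2 (S m) ltac:(unfold m; lia)).
  pose proof (HN3 (S m) ltac:(unfold m; lia)).
  pose proof (sgap_le_via (f a) (g a) (f (x (S m))) (g (x (S m)))
                (Hcons _ _ (Hdiag m))).
  unfold sgap in *. unfold e in *. lra.
Qed.

End StrongPartialMetric.

Section MutualContraction.

Variables (X Y : Type) (p : X -> X -> R) (s : Y -> Y -> R) (f g : X -> Y) (r A c : R).
Hypotheses (Hs : is_strong_partial_metric s) (HA : 0 <= A) (Hc : 0 <= c).

Let d (x : X) : R := sgap s (f x) (g x).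

Variable F : X -> X.
Hypothesis HF : forall x, d (F x) <= c * d x /\ r <= p (F x) (F x) /\
  p x (F x) <= r + A * d x.

Variable x0 : X.

Let orbit (n : nat) : X := Nat.iter n F x0.

Lemma orbit_gap_le (n : nat) : d (orbit n) <= c ^ n * d x0.
Proof.
  induction n as [|n IHn]; simpl; [lra|].
  destruct (HF (orbit n)) as [Hcontr _].
  apply (Rmult_le_compat_l c) in IHn; [|lra].
  fold (orbit n). lra.
Qed.

Lemma orbit_diag_ge (n : nat) : r <= p (orbit (S n)) (orbit (S n)).
Proof. apply (HF (orbit n)). Qed.

Lemma orbit_step_le (n : nat) :
  p (orbit n) (orbit (S n)) <= r + A * d x0 * c ^ n.
Proof.
  destruct (HF (orbit n)) as [_ [_ Hstep]].
  pose proof (orbit_gap_le n) as Hgap.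
  apply (Rmult_le_compat_l A) in Hgap; [|lra].
  simpl. fold (orbit n). lra.
Qed.

Lemma orbit_gap_vanishes : c < 1 -> forall eps, eps > 0 ->
  exists N : nat, forall n, (n > N)%nat -> d (orbit n) < eps.
Proof.
  intros Hc1 eps Heps.
  destruct (geometric_eventually_lt c (d x0) eps ltac:(lra) Heps) as [N HN].
  exists N. intros n Hn.
  pose proof (orbit_gap_le n). pose proof (HN n Hn). lra.
Qed.

Lemma orbit_cauchy : is_partial_metric p -> c < 1 -> cauchy_central p orbit r.
Proof.
  intros Hp Hc1.
  apply (pm_geometric_cauchy X p Hp orbit r (A * d x0) c).
  - pose proof (sgap_ge0 Y s Hs (f x0) (g x0)) as Hd0. fold (d x0) in Hd0. nra.
  - lra.
  - exact orbit_diag_ge.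
  - exact orbit_step_le.
Qed.

End MutualContraction.

Theorem theorem7p19 (X Y : Type) (p : X -> X -> R) (s : Y -> Y -> R)
  (f g : X -> Y) (r A c : R) :
  inhabited X ->
  is_partial_metric p -> pm_complete p ->
  is_strong_partial_metric s ->
  seq_continuous p s f -> seq_continuous p s g ->
  consistent p s g ->
  0 <= A -> 0 < c -> c < 1 ->
  (forall x : X, exists z : X,
      s (f z) (g z) - s (f z) (f z) <= c * (s (f x) (g x) - s (f x) (f x)) /\
      r <= p z z /\ p z z <= p x z /\
      p x z <= r + A * (s (f x) (g x) - s (f x) (f x))) ->
  exists a : X, f a = g a.
Proof.
  intros [x0] Hp Hcomp Hs Hf Hg Hcons HA Hc0 Hc1 Hcontr.
  destruct (choice _ Hcontr) as [F HF].
  assert (HF' : forall x, sgap s (f (F x)) (g (F x)) <= c * sgap s (f x) (g x) /\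
                  r <= p (F x) (F x) /\ p x (F x) <= r + A * sgap s (f x) (g x))
    by (intro x; destruct (HF x) as [? [? [? ?]]]; unfold sgap; lra).
  set (orbit := fun n => Nat.iter n F x0).
  assert (Hcau : cauchy_central p orbit r)
    by exact (orbit_cauchy X Y p s f g r A c Hs HA (Rlt_le _ _ Hc0) F HF' x0 Hp Hc1).
  destruct (Hcomp orbit r Hcau) as [a [Hlim Haa]].
  exists a.
  apply (coincidence_at_limit Y s Hs X p f g orbit a Hf Hg Hcons Hlim).
  - intro n. rewrite Haa. exact (orbit_diag_ge X Y p s f g r A c F HF' x0 n).
  - exact (orbit_gap_vanishes X Y p s f g r A c (Rlt_le _ _ Hc0) F HF' x0 Hc1).
Qed.
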